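(* Let $L_{\max},V_{\max},S,N,B,D>0$ and, for vehicle density $\lambda\in[0,L_{\max}]$, let $\mu(\lambda)=\frac{V_{\max}}{S}\left(1-\frac{\lambda}{L_{\max}}\right)$ (linear speed-density relationship $V(\lambda)=V_{\max}(1-\lambda/L_{\max})$, $\mu=V/S$). In the short deadline regime, where the average deadline violation probability is $\exp\left(-\frac{\lambda S}{2N}B\mu(\lambda)^2D^2\right)$, the vehicle density minimizing the average deadline violation probability over $0\le\lambda\le L_{\max}$ is $L^\dagger=\frac{L_{\max}}{3}$.
   Context: $V_{\max}$ is the speed limit, $L_{\max}$ the traffic-jam vehicle density, $S$ the road length, $B$ the number of roadside units, $N$ the number of tasks, $D$ the deadline, and $\mu$ the rate at which a vehicle meets a given roadside unit. *)

From Stdlib Require Import Reals.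
Open Scope R_scope.

(* Meeting rate of a vehicle with a given RSU under the linear
   speed-density relation V(l) = Vmax (1 - l/Lmax), mu = V/S. *)
Definition mu (Vmax Lmax S lam : R) : R := Vmax / S * (1 - lam / Lmax).

Definition avg_violation (Vmax Lmax S N B D lam : R) : R :=
  exp (- (lam * S / (2 * N) * B * (mu Vmax Lmax S lam) ^ 2 * D ^ 2)).

(* Up to a positive constant factor, the exponent of the violation
   probability is the cubic x (Lmax - x)^2, and
   (Lmax/3)(2 Lmax/3)^2 - x (Lmax - x)^2 = (x - Lmax/3)^2 (4 Lmax/3 - x),
   which is nonnegative on [0, Lmax] and vanishes there only at Lmax/3.
   Since exp is strictly increasing, the violation probability is minimal
   exactly where the cubic is maximal. *)

From Stdlib Require Import Reals Lra Psatz.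
Open Scope R_scope.

Definition density_cubic (L x : R) : R := x * (L - x) ^ 2.

Lemma density_cubic_gap (L x : R) :
  density_cubic L (L / 3) - density_cubic L x = (x - L / 3) ^ 2 * (4 * L / 3 - x).
Proof. unfold density_cubic; field. Qed.

Lemma density_cubic_le_third (L x : R) :
  x <= 4 * L / 3 -> density_cubic L x <= density_cubic L (L / 3).
Proof.
  intros Hx.
  assert (Hgap : 0 <= (x - L / 3) ^ 2 * (4 * L / 3 - x))
    by (apply Rmult_le_pos; [apply pow2_ge_0 | lra]).
  rewrite <- density_cubic_gap in Hgap; lra.
Qed.

Lemma density_cubic_argmax_unique (L x : R) :
  x < 4 * L / 3 -> density_cubic L (L / 3) <= density_cubic L x -> x = L / 3.
Proof.
  intros Hx Hle.
  assert (Hgap : (x - L / 3) ^ 2 * (4 * L / 3 - x) <= 0)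
    by (rewrite <- density_cubic_gap; lra).
  assert (Hsq : (x - L / 3) ^ 2 <= 0).
  { apply Rmult_le_reg_r with (4 * L / 3 - x); lra. }
  nra.
Qed.

Lemma exp_neg_scaled_le (K a b : R) :
  0 < K -> (exp (- (K * a)) <= exp (- (K * b)) <-> b <= a).
Proof.
  intros HK; split; intros H.
  - destruct H as [Hlt | Heq].
    + apply exp_lt_inv in Hlt; nra.
    + apply exp_inv in Heq; nra.
  - destruct (Rle_lt_or_eq_dec b a H) as [Hlt | Heq].
    + left; apply exp_increasing; nra.
    + right; subst; reflexivity.
Qed.

Definition violation_rate (Vmax Lmax S N B D : R) : R :=
  B * Vmax ^ 2 * D ^ 2 / (2 * N * S * Lmax ^ 2).

Lemma violation_rate_pos (Vmax Lmax S N B D : R) :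
  0 < Lmax -> 0 < Vmax -> 0 < S -> 0 < N -> 0 < B -> 0 < D ->
  0 < violation_rate Vmax Lmax S N B D.
Proof.
  intros HL HV HS HN HB HD; unfold violation_rate.
  apply Rdiv_lt_0_compat; repeat apply Rmult_lt_0_compat; try apply pow_lt; lra.
Qed.

Lemma avg_violation_cubic (Vmax Lmax S N B D lam : R) :
  0 < Lmax -> 0 < S -> 0 < N ->
  avg_violation Vmax Lmax S N B D lam =
  exp (- (violation_rate Vmax Lmax S N B D * density_cubic Lmax lam)).
Proof.
  intros HL HS HN; unfold avg_violation, mu, violation_rate, density_cubic.
  f_equal; field; lra.
Qed.

Theorem corollary2 (Lmax Vmax S N B D : R) :
  0 < Lmax -> 0 < Vmax -> 0 < S -> 0 < N -> 0 < B -> 0 < D ->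
  (0 <= Lmax / 3 <= Lmax) /\
  (forall lam, 0 <= lam <= Lmax ->
     avg_violation Vmax Lmax S N B D (Lmax / 3) <= avg_violation Vmax Lmax S N B D lam) /\
  (forall L, 0 <= L <= Lmax ->
     (forall lam, 0 <= lam <= Lmax ->
        avg_violation Vmax Lmax S N B D L <= avg_violation Vmax Lmax S N B D lam) ->
     L = Lmax / 3).
Proof.
  intros HL HV HS HN HB HD.
  pose proof (violation_rate_pos Vmax Lmax S N B D HL HV HS HN HB HD) as HK.
  split; [lra | split].
  - intros lam Hlam.
    rewrite !avg_violation_cubic, exp_neg_scaled_le by lra.
    apply density_cubic_le_third; lra.
  - intros L HLr Hmin.
    specialize (Hmin (Lmax / 3) ltac:(lra)).
    rewrite !avg_violation_cubic, exp_neg_scaled_le in Hmin by lra.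
    apply (density_cubic_argmax_unique Lmax); lra.
Qed.
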